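(* Let $\mathcal{P}$ be the set of weak orders on a set $\mathcal{A}$, ordered by strictness $\le$. For weak orders $r,s\in\mathcal{P}$, regarded as subsets of $\mathcal{A}\times\mathcal{A}$: (1) $r\le s$ implies $r\subseteq s$; (2) the least upper bound $r\vee s$ in $(\mathcal{P},\le)$ is the transitive closure of $r\cup s$; (3) the greatest lower bound $r\wedge s$ in $(\mathcal{P},\le)$, if it exists, is $r\cap s$.
   Context: A weak order on $\mathcal{A}$ is a transitive and complete relation; it is identified with the set of pairs $(a,b)$ such that $a\preceq b$ ($a$ weakly preferred to $b$). $a\prec b$ (strict preference) means $a\preceq b$ and not $b\preceq a$. Strictness order: $r\le s$ iff every strict preference $a\prec b$ of $s$ is also a strict preference of $r$. *)

From Stdlib Require Export Relations.

(* a weak order: transitive and complete; R a b reads "a is weakly preferred to b" *)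
Definition complete {A : Type} (R : relation A) : Prop :=
  forall a b : A, R a b \/ R b a.

Definition weak_order {A : Type} (R : relation A) : Prop :=
  transitive A R /\ complete R.

Definition strict {A : Type} (R : relation A) (a b : A) : Prop :=
  R a b /\ ~ R b a.

Definition stricter {A : Type} (r s : relation A) : Prop :=
  forall a b : A, strict s a b -> strict r a b.

Definition is_lub {A : Type} (r s t : relation A) : Prop :=
  weak_order t /\ stricter r t /\ stricter s t /\
  (forall u : relation A, weak_order u -> stricter r u -> stricter s u -> stricter t u).

Definition is_glb {A : Type} (r s g : relation A) : Prop :=
  weak_order g /\ stricter g r /\ stricter g s /\
  (forall u : relation A, weak_order u -> stricter u r -> stricter u s -> stricter u g).

From Stdlib Require Import Classical.

(* For complete relations, being stricter is the same as being contained: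
   a strict preference of [s] is exactly a pair that [r], being complete
   and contained in [s], orders in the same direction and not back.  The
   join is then the least transitive relation containing [r] and [s].  For
   the meet [g], if [r] and [s] both relate [a] to [b], adjoining the pair
   [(a, b)] to [g] and closing transitively gives a weak order still
   contained in [r] and in [s]; maximality of [g] forces it back into [g],
   so [g a b]. *)

Section Relations.

Variable A : Type.
Implicit Types r s t u g : relation A.

Lemma complete_reflexive r : complete r -> reflexive A r.
Proof. intros Cr a; destruct (Cr a a); assumption. Qed.

Lemma stricter_inclusion r s : complete s -> stricter r s -> inclusion A r s.
Proof.
  intros Cs Hrs a b rab.
  destruct (classic (s a b)) as [sab | nsab]; [assumption |].
  destruct (Cs a b) as [sab | sba]; [contradiction |].
  destruct (Hrs b a (conj sba nsab)) as [_ nrab].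
  contradiction.
Qed.

Lemma inclusion_stricter r s : complete r -> inclusion A r s -> stricter r s.
Proof.
  intros Cr Irs a b [sab nsba].
  split.
  - destruct (Cr a b) as [rab | rba]; [assumption |].
    exfalso; apply nsba, Irs, rba.
  - intro rba; apply nsba, Irs, rba.
Qed.

Lemma clos_trans_minimal r t :
  transitive A t -> inclusion A r t -> inclusion A (clos_trans A r) t.
Proof.
  intros Tt Irt x y Hxy.
  induction Hxy as [x y rxy | x y z _ IHxy _ IHyz].
  - apply Irt, rxy.
  - apply Tt with y; assumption.
Qed.

Lemma weak_order_clos_trans_union r s :
  complete r -> weak_order (clos_trans A (union A r s)).
Proof.
  intros Cr; split.
  - intros x y z; apply t_trans.
  - intros x y; destruct (Cr x y); [left | right]; apply t_step; left; assumption.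
Qed.

Lemma is_lub_clos_trans_union r s :
  complete r -> complete s -> is_lub r s (clos_trans A (union A r s)).
Proof.
  intros Cr Cs.
  set (t := clos_trans A (union A r s)).
  assert (Ct : complete t) by apply (weak_order_clos_trans_union r s Cr).
  split; [apply weak_order_clos_trans_union; assumption |].
  split; [| split].
  - apply inclusion_stricter; [assumption |].
    intros x y rxy; apply t_step; left; assumption.
  - apply inclusion_stricter; [assumption |].
    intros x y sxy; apply t_step; right; assumption.
  - intros u [Tu Cu] Hru Hsu.
    apply inclusion_stricter; [assumption |].
    apply clos_trans_minimal; [assumption |].
    intros x y [rxy | sxy].
    + apply (stricter_inclusion r u Cu Hru), rxy.
    + apply (stricter_inclusion s u Cu Hsu), sxy.
Qed.

(* For reflexive transitive [g], the transitive closure of [g] plus the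
   pair [(a, b)]. *)
Definition adjoin g (a b : A) : relation A :=
  fun x y => g x y \/ (g x a /\ g b y).

Lemma weak_order_adjoin g a b : weak_order g -> weak_order (adjoin g a b).
Proof.
  intros [Tg Cg]; split.
  - intros x y z [gxy | [gxa gby]] [gyz | [gya gbz]].
    + left; apply Tg with y; assumption.
    + right; split; [apply Tg with y |]; assumption.
    + right; split; [| apply Tg with y]; assumption.
    + right; split; assumption.
  - intros x y; destruct (Cg x y); [left | right]; left; assumption.
Qed.

Lemma adjoin_inclusion g t a b :
  transitive A t -> inclusion A g t -> t a b -> inclusion A (adjoin g a b) t.
Proof.
  intros Tt Igt tab x y [gxy | [gxa gby]].
  - apply Igt, gxy.
  - apply Tt with a; [apply Igt, gxa |].
    apply Tt with b; [| apply Igt]; assumption.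
Qed.

Lemma adjoin_pair g a b : reflexive A g -> adjoin g a b a b.
Proof. intros Rg; right; split; apply Rg. Qed.

Lemma is_glb_intersection r s g :
  weak_order r -> weak_order s -> is_glb r s g ->
  forall a b, g a b <-> (r a b /\ s a b).
Proof.
  intros [Tr Cr] [Ts Cs] [Wg [Hgr [Hgs Hmax]]] a b.
  pose proof Wg as [_ Cg].
  split.
  - intro gab; split.
    + apply (stricter_inclusion g r Cr Hgr), gab.
    + apply (stricter_inclusion g s Cs Hgs), gab.
  - intros [rab sab].
    set (u := adjoin g a b).
    assert (Wu : weak_order u) by apply (weak_order_adjoin g a b Wg).
    assert (Iur : inclusion A u r).
    { apply adjoin_inclusion; [| apply stricter_inclusion |]; assumption. }
    assert (Ius : inclusion A u s).
    { apply adjoin_inclusion; [| apply stricter_inclusion |]; assumption. }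
    assert (Hug : stricter u g).
    { pose proof Wu as [_ Cu].
      apply Hmax; [exact Wu | apply inclusion_stricter ..]; assumption. }
    apply (stricter_inclusion u g Cg Hug), adjoin_pair, complete_reflexive, Cg.
Qed.

End Relations.

Theorem proposition7 (A : Type) (r s : relation A) :
  weak_order r -> weak_order s ->
  (stricter r s -> inclusion A r s) /\
  is_lub r s (clos_trans A (union A r s)) /\
  (forall g : relation A, is_glb r s g ->
     forall a b : A, g a b <-> (r a b /\ s a b)).
Proof.
  intros Wr Ws.
  pose proof Wr as [_ Cr]; pose proof Ws as [_ Cs].
  split; [| split].
  - apply stricter_inclusion, Cs.
  - apply is_lub_clos_trans_union; assumption.
  - intros g Hg; apply is_glb_intersection; assumption.
Qed.
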